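(* Let $\mathbf U$ be a group variety and let $\Gamma$ and $\Delta$ be finite connected directed graphs such that $\Delta$ is a minor of $\Gamma$. If $\Delta$ does not have property $\mathrm{P}(\mathbf U)$, then $\Gamma$ does not have property $\mathrm{P}(\mathbf U)$.
   Context: All graphs are finite directed graphs, possibly with loops and multiple edges. A graph $\Gamma$ has vertex set $V(\Gamma)$ and edge set $E(\Gamma)$, and each edge $e$ has an initial vertex $\iota e$ and a terminal vertex $\tau e$. A subgraph is regarded as a set of vertices and edges (containing the endpoints of its edges); unions and intersections of subgraphs are taken as sets of vertices and edges. Connectedness refers to the underlying undirected graph. Let $\overline{\Gamma}$ be the graph with vertex set $V(\Gamma)$ and edge set $E(\Gamma)\sqcup E(\Gamma)^{-1}$, where for $e\in E(\Gamma)$ the formal edge $e^{-1}$ goes from $\tau e$ to $\iota e$. A path $p$ in $\overline{\Gamma}$ is either an empty path at a vertex or a sequence $e_1\cdots e_n$ of edges of $\overline{\Gamma}$ with $\tau e_i=\iota e_{i+1}$; it has initial vertex $\iota p$ and terminal vertex $\tau p$, and is regarded as a word over the alphabet $E(\Gamma)\cup E(\Gamma)^{-1}$. The span $\langle p\rangle$ is the subgraph of $\Gamma$ consisting of the vertices traversed by $p$ and the edges $e\in E(\Gamma)$ such that $e$ or $e^{-1}$ occurs in $p$. For a group variety $\mathbf{U}$ and words $u,v$ over $X\cup X^{-1}$, write $u\equiv_{\mathbf U} v$ if $u$ and $v$ represent the same element of the relatively free group of $\mathbf U$ on $X$ (i.e. the identity $u=v$ holds in $\mathbf U$), and $[u]_{\mathbf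 U}$ for the class of $u$. The free $g\mathbf U$-category on $\Gamma$ has vertex set $V(\Gamma)$; its arrows from $i$ to $j$ are the triples $(i,[p]_{\mathbf U},j)$ with $p$ an $(i,j)$-path in $\overline\Gamma$, and $(i,[p]_{\mathbf U},j)(j,[q]_{\mathbf U},k)=(i,[pq]_{\mathbf U},k)$; for an arrow $x=(i,[p]_{\mathbf U},j)$ put $\iota x=i$, $\tau x=j$. For each arrow $x$ define subgraphs of $\Gamma$: $C_0(x)=\bigcap\{\langle p\rangle : p \text{ a path in }\overline\Gamma \text{ with } (\iota p,[p]_{\mathbf U},\tau p)=x\}$; $P_n(x)$ is the connected component of $C_n(x)$ containing $\iota x$; $C_{n+1}(x)=\bigcap\{P_n(x_1)\cup\cdots\cup P_n(x_k) : k\ge 1,\ x_1,\dots,x_k \text{ arrows with } x_1\cdots x_k=x\}$; and $P(x)=\bigcap_{n\ge 0}P_n(x)$. A connected graph $\Gamma$ has property $\mathrm{P}(\mathbf U)$ if $\tau x\in P(x)$ for every arrow $x$ of the free $g\mathbf U$-category on $\Gamma$. A graph $\Delta$ is a minor of $\Gamma$ if $\Delta$ can be obtained from $\Gamma$ by a finite sequence of the following operations: contracting an edge $e$ with $\iota e\neq\tau e$ (removing $e$ and identifying its two endpoints into one vertex), deleting an edge, deleting a vertex together with its incident edges, and reversing the direction of an edge. *)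

From Stdlib Require List.
From mathcomp Require Import all_boot.
Set Implicit Arguments. Unset Strict Implicit. Unset Printing Implicit Defensive.

Record group := Group {
  gcar :> Type;
  gmul : gcar -> gcar -> gcar;
  ginv : gcar -> gcar;
  gone : gcar;
  gmulA : forall x y z, gmul x (gmul y z) = gmul (gmul x y) z;
  gmul1x : forall x, gmul gone x = x;
  gmulx1 : forall x, gmul x gone = x;
  gmulVx : forall x, gmul (ginv x) x = gone;
  gmulxV : forall x, gmul x (ginv x) = gone }.

(* Words over X u X^{-1}: a letter (a, true) is a, (a, false) is a^{-1}. *)
Definition word (A : Type) := seq (A * bool).

Definition eval_word (G : group) (A : Type) (f : A -> G) (w : word A) : G :=
  foldr (fun l acc => gmul (if l.2 then f l.1 else ginv (f l.1)) acc) (gone G) w.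

(* A group variety, given by its defining set of laws (words w in countably
   many variables; the law is w = 1).  The variety is the class of all groups
   satisfying every law. *)
Definition variety := word nat -> Prop.

Definition in_variety (U : variety) (G : group) : Prop :=
  forall w, U w -> forall f : nat -> G, eval_word f w = gone G.

Definition U_equiv (U : variety) (A : Type) (u v : word A) : Prop :=
  forall G : group, in_variety U G -> forall f : A -> G, eval_word f u = eval_word f v.

Record graph := Graph {
  gV : finType;
  gE : finType;
  src : gE -> gV;
  tgt : gE -> gV }.

Definition adj (G : graph) : rel (gV G) := fun x y =>
  [exists e : gE G, ((src e == x) && (tgt e == y)) || ((src e == y) && (tgt e == x))].

Definition connected_graph (G : graph) : Prop :=
  forall x y : gV G, connect (@adj G) x y.

Definition lsrc (G : graph) (l : gE G * bool) : gV G := if l.2 then src l.1 else tgt l.1.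
Definition ltgt (G : graph) (l : gE G * bool) : gV G := if l.2 then tgt l.1 else src l.1.

Fixpoint is_path (G : graph) (i : gV G) (p : word (gE G)) (j : gV G) : Prop :=
  match p with
  | [::] => i = j
  | l :: p' => lsrc l = i /\ is_path (ltgt l) p' j
  end.

(* Subgraphs, as (possibly infinite intersections of) sets of vertices and edges. *)
Record subgraph (G : graph) := Subgraph { sV : gV G -> Prop; sE : gE G -> Prop }.

Definition span (G : graph) (i : gV G) (p : word (gE G)) : subgraph G :=
  Subgraph (fun v => v = i \/ exists l, List.In l p /\ (v = lsrc l \/ v = ltgt l))
           (fun e => List.In (e, true) p \/ List.In (e, false) p).

(* connected component of the subgraph S containing i (empty if i is not in S) *)
Definition sub_step (G : graph) (S : subgraph G) (x y : gV G) : Prop :=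
  exists e, sE S e /\ ((src e = x /\ tgt e = y) \/ (src e = y /\ tgt e = x)).

Inductive rt_clos (T : Type) (R : T -> T -> Prop) (x : T) : T -> Prop :=
  | rt_refl : rt_clos R x x
  | rt_step y z : rt_clos R x y -> R y z -> rt_clos R x z.

Definition component (G : graph) (S : subgraph G) (i : gV G) : subgraph G :=
  Subgraph (fun v => sV S i /\ rt_clos (sub_step S) i v)
           (fun e => sE S e /\ sV S i /\ rt_clos (sub_step S) i (src e)).

(* ---------- The sets C_n, P_n of an arrow x = (i, [p]_U, j) ----------
   Arrows are handled through representatives (i, p, j) with is_path i p j;
   all definitions below only depend on the U-class of p. *)

Definition C0 (U : variety) (G : graph) (i : gV G) (p : word (gE G)) (j : gV G)
  : subgraph G :=
  Subgraph (fun v => forall q, is_path i q j -> U_equiv U q p -> sV (span i q) v)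
           (fun e => forall q, is_path i q j -> U_equiv U q p -> sE (span i q) e).

Fixpoint factorization (G : graph) (i : gV G)
    (xs : seq (gV G * word (gE G) * gV G)) (j : gV G) : Prop :=
  match xs with
  | [::] => i = j
  | (a, p, b) :: xs' => a = i /\ is_path a p b /\ factorization b xs' j
  end.

Definition prod_word (G : graph) (xs : seq (gV G * word (gE G) * gV G)) : word (gE G) :=
  flatten [seq x.1.2 | x <- xs].

Fixpoint Cn (U : variety) (G : graph) (n : nat) (i : gV G) (p : word (gE G)) (j : gV G)
  {struct n} : subgraph G :=
  match n with
  | 0 => C0 U i p j
  | n'.+1 =>
    Subgraph
      (fun v => forall xs, xs <> [::] -> factorization i xs j ->
                  U_equiv U (prod_word xs) p ->
                  exists x, List.In x xs /\ sV (component (Cn U n' x.1.1 x.1.2 x.2) x.1.1) v)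
      (fun e => forall xs, xs <> [::] -> factorization i xs j ->
                  U_equiv U (prod_word xs) p ->
                  exists x, List.In x xs /\ sE (component (Cn U n' x.1.1 x.1.2 x.2) x.1.1) e)
  end.

Definition Pn (U : variety) (G : graph) (n : nat) (i : gV G) (p : word (gE G)) (j : gV G)
  : subgraph G := component (Cn U n i p j) i.

(* property P(U): tau x lies in P(x) = \bigcap_n P_n(x) for every arrow x *)
Definition has_property_P (U : variety) (G : graph) : Prop :=
  forall (i j : gV G) (p : word (gE G)), is_path i p j -> forall n, sV (Pn U n i p j) j.

(* Each operation is stated up to isomorphism of the resulting graph. *)
Definition graph_iso (G H : graph) : Prop :=
  exists (fv : gV H -> gV G) (fe : gE H -> gE G),
    bijective fv /\ bijective fe /\
    (forall y, src (fe y) = fv (src y)) /\ (forall y, tgt (fe y) = fv (tgt y)).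

Definition delete_edge (G H : graph) : Prop :=
  exists (e : gE G) (fv : gV H -> gV G) (fe : gE H -> gE G),
    bijective fv /\ injective fe /\ (forall y, fe y <> e) /\
    (forall x, x <> e -> exists y, fe y = x) /\
    (forall y, src (fe y) = fv (src y)) /\ (forall y, tgt (fe y) = fv (tgt y)).

Definition delete_vertex (G H : graph) : Prop :=
  exists (v : gV G) (fv : gV H -> gV G) (fe : gE H -> gE G),
    injective fv /\ (forall y, fv y <> v) /\ (forall x, x <> v -> exists y, fv y = x) /\
    injective fe /\
    (forall x, src x <> v -> tgt x <> v -> exists y, fe y = x) /\
    (forall y, src (fe y) = fv (src y)) /\ (forall y, tgt (fe y) = fv (tgt y)).

Definition contract_edge (G H : graph) : Prop :=
  exists (e : gE G), src e <> tgt e /\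
  exists (fv : gV G -> gV H) (fe : gE H -> gE G),
    (forall y, exists x, fv x = y) /\
    (forall x x', fv x = fv x' <->
       (x = x' \/ ((x = src e \/ x = tgt e) /\ (x' = src e \/ x' = tgt e)))) /\
    injective fe /\ (forall y, fe y <> e) /\
    (forall x, x <> e -> exists y, fe y = x) /\
    (forall y, src y = fv (src (fe y))) /\ (forall y, tgt y = fv (tgt (fe y))).

Definition reverse_edge (G H : graph) : Prop :=
  exists (e : gE G) (fv : gV H -> gV G) (fe : gE H -> gE G),
    bijective fv /\ bijective fe /\
    (forall y, fv (src y) = if fe y == e then tgt (fe y) else src (fe y)) /\
    (forall y, fv (tgt y) = if fe y == e then src (fe y) else tgt (fe y)).

Definition minor_step (G H : graph) : Prop :=
  graph_iso G H \/ delete_edge G H \/ delete_vertex G H \/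
  contract_edge G H \/ reverse_edge G H.

Definition minor (G D : graph) : Prop := rt_clos minor_step G D.

(* Each minor operation turning Gamma into Delta comes with a simulation of Delta inside
   Gamma: every vertex of Delta is lifted to a vertex of Gamma, every letter of Delta to a
   path of Gamma, and Gamma projects back onto Delta, edges either going to edges or being
   collapsed to a vertex.  The lift of words preserves U-equivalence of coterminal paths,
   because each lifted letter evaluates, in any group, to a conjugate of a fixed image of
   the letter by values attached to its endpoints.  By induction on n, the projection maps
   C_n and P_n of a lifted arrow of Gamma into C_n and P_n of the original arrow of Delta,
   so property P(U) passes from Gamma to Delta; iterating along the minor sequence gives
   the contrapositive. *)
From Stdlib Require List.
From mathcomp Require Import all_boot.
Set Implicit Arguments. Unset Strict Implicit. Unset Printing Implicit Defensive.

Section GroupFacts.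
Variable G : group.
Implicit Types x y : G.

Lemma ginv_unique x y : gmul x y = gone G -> y = ginv x.
Proof. by move=> xy1; rewrite -(gmul1x y) -(gmulVx x) -gmulA xy1 gmulx1. Qed.

Lemma ginvK x : ginv (ginv x) = x.
Proof. by symmetry; apply: ginv_unique; exact: gmulVx. Qed.

Lemma ginv1 : ginv (gone G) = gone G.
Proof. by symmetry; apply: ginv_unique; exact: gmulx1. Qed.

Lemma ginvM x y : ginv (gmul x y) = gmul (ginv y) (ginv x).
Proof.
by symmetry; apply: ginv_unique; rewrite -gmulA (gmulA y) gmulxV gmul1x gmulxV.
Qed.

End GroupFacts.

Definition eval_letter (G : group) (A : Type) (f : A -> G) (l : A * bool) : G :=
  if l.2 then f l.1 else ginv (f l.1).

Lemma eval_word_cat (G : group) (A : Type) (f : A -> G) u v :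
  eval_word f (u ++ v) = gmul (eval_word f u) (eval_word f v).
Proof. by elim: u => [|l u IH] /=; rewrite ?gmul1x // IH gmulA. Qed.

Lemma U_equiv_refl (U : variety) (A : Type) (u : word A) : U_equiv U u u.
Proof. by []. Qed.

Lemma is_path_cat (G : graph) (i m j : gV G) p q :
  is_path i p m -> is_path m q j -> is_path i (p ++ q) j.
Proof.
elim: p i => [|l p IH] i /=; first by move=> ->.
by move=> [li pm] qj; split => //; apply: IH.
Qed.

Lemma factorization_path (G : graph) (i j : gV G) xs :
  factorization i xs j -> is_path i (prod_word xs) j.
Proof.
elim: xs i => [|[[a p] b] xs IH] i //= [-> [pab xsj]].
by apply: is_path_cat pab _; exact: IH.
Qed.

Lemma factorization_mem_path (G : graph) (i j : gV G) xs x :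
  factorization i xs j -> List.In x xs -> is_path x.1.1 x.1.2 x.2.
Proof.
elim: xs i => [|[[a p] b] xs IH] i //= [-> [pab xsj]] [<-|xxs] //.
exact: IH xsj xxs.
Qed.

Definition subst_word (A B : Type) (ell : A * bool -> word B) (q : word A) : word B :=
  flatten (map ell q).

Lemma subst_word_cat (A B : Type) (ell : A * bool -> word B) u v :
  subst_word ell (u ++ v) = subst_word ell u ++ subst_word ell v.
Proof. by rewrite /subst_word map_cat flatten_cat. Qed.

Lemma in_subst_word (A B : Type) (ell : A * bool -> word B) q l :
  List.In l (subst_word ell q) -> exists2 a, List.In a q & List.In l (ell a).
Proof.
elim: q => [|a q IH] //= lq; case: (List.in_app_or _ _ _ lq) => [la|{}lq].
  by exists a; [left|].
by case: (IH lq) => a' a'q la'; exists a'; [right|].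
Qed.

(* A coboundary twist of a letter-wise substitution: it is invisible on coterminal paths. *)
Definition twisted_subst (Ga De : graph) (ell : gE De * bool -> word (gE Ga)) : Prop :=
  forall (G : group) (f : gE Ga -> G), exists (g : gE De -> G) (h : gV De -> G), forall a,
    eval_word f (ell a) = gmul (h (lsrc a)) (gmul (eval_letter g a) (ginv (h (ltgt a)))).

Lemma eval_twisted_subst (Ga De : graph) (ell : gE De * bool -> word (gE Ga))
    (G : group) (f : gE Ga -> G) (g : gE De -> G) (h : gV De -> G) :
  (forall a, eval_word f (ell a) =
             gmul (h (lsrc a)) (gmul (eval_letter g a) (ginv (h (ltgt a))))) ->
  forall i j q, is_path i q j ->
    eval_word f (subst_word ell q) = gmul (h i) (gmul (eval_word g q) (ginv (h j))).
Proof.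
move=> ellE i j q; elim: q i => [|a q IH] i /=; first by move=> ->; rewrite gmul1x gmulxV.
move=> [<- qj]; rewrite eval_word_cat ellE (IH _ qj) -!gmulA.
by rewrite (gmulA (ginv _) (h _)) gmulVx gmul1x.
Qed.

Lemma twisted_subst_U_equiv (U : variety) (Ga De : graph)
    (ell : gE De * bool -> word (gE Ga)) :
  twisted_subst ell -> forall i j q q', is_path i q j -> is_path i q' j -> U_equiv U q q' ->
    U_equiv U (subst_word ell q) (subst_word ell q').
Proof.
move=> tw i j q q' qij q'ij qq' G GU f; have [g [h ellE]] := tw G f.
by rewrite (eval_twisted_subst ellE qij) (eval_twisted_subst ellE q'ij) (qq' G GU g).
Qed.

Section SubgraphMaps.
Variables (Ga De : graph) (proj : gV Ga -> gV De) (proj_edge : gE Ga -> option (gE De)).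

Definition subgraph_maps (S : subgraph Ga) (T : subgraph De) : Prop :=
  (forall v, sV S v -> sV T (proj v)) /\
  (forall e, sE S e -> match proj_edge e with
                       | Some d => sE T d
                       | None => proj (src e) = proj (tgt e)
                       end).

Hypothesis proj_edge_ends : forall e d, proj_edge e = Some d ->
  (proj (src e) = src d /\ proj (tgt e) = tgt d) \/
  (proj (src e) = tgt d /\ proj (tgt e) = src d).

Lemma subgraph_maps_reach S T x y : subgraph_maps S T ->
  rt_clos (sub_step S) x y -> rt_clos (sub_step T) (proj x) (proj y).
Proof.
move=> [_ ST]; elim => [|y1 z _ IH [e [Se ends]]]; first exact: rt_refl.
have := ST e Se; case ed: (proj_edge e) => [d|] Td.
  apply: (rt_step IH); exists d; split => //.
  by case: ends => -[<- <-]; case: (proj_edge_ends ed) => -[-> ->]; auto.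
by case: ends IH => -[<- <-]; rewrite Td.
Qed.

Lemma subgraph_maps_component S T x :
  subgraph_maps S T -> subgraph_maps (component S x) (component T (proj x)).
Proof.
move=> ST; have [SVT SET] := ST; split => [v [Sx xv]|e [Se [Sx xe]]].
  by split; [exact: SVT | exact: subgraph_maps_reach ST xv].
have := SET e Se; case ed: (proj_edge e) => [d|] Td //.
split => //; split; first exact: SVT.
case: (proj_edge_ends ed) => -[E1 E2].
  by rewrite -E1; exact: subgraph_maps_reach ST xe.
by apply: (rt_step (subgraph_maps_reach ST xe)); exists d; split => //; rewrite E1; auto.
Qed.

End SubgraphMaps.

Section Simulation.
Variables (U : variety) (Ga De : graph).
Variables (lift : gV De -> gV Ga) (lift_letter : gE De * bool -> word (gE Ga)).
Variables (proj : gV Ga -> gV De) (proj_edge : gE Ga -> option (gE De)).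

Hypothesis lift_letter_path :
  forall a, is_path (lift (lsrc a)) (lift_letter a) (lift (ltgt a)).
Hypothesis lift_letter_twisted : twisted_subst lift_letter.
Hypothesis liftK : cancel lift proj.
Hypothesis proj_edge_ends : forall e d, proj_edge e = Some d ->
  (proj (src e) = src d /\ proj (tgt e) = tgt d) \/
  (proj (src e) = tgt d /\ proj (tgt e) = src d).
Hypothesis proj_lift_letter_ends : forall a l, List.In l (lift_letter a) ->
  (proj (lsrc l) = lsrc a \/ proj (lsrc l) = ltgt a) /\
  (proj (ltgt l) = lsrc a \/ proj (ltgt l) = ltgt a).
Hypothesis proj_lift_letter_edge : forall a l, List.In l (lift_letter a) ->
  match proj_edge l.1 with
  | Some d => d = a.1
  | None => proj (src l.1) = proj (tgt l.1)
  end.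

Local Notation lift_word := (subst_word lift_letter).
Local Notation maps := (subgraph_maps proj proj_edge).

Let lift_word_U_equiv i j q q' : is_path i q j -> is_path i q' j -> U_equiv U q q' ->
  U_equiv U (lift_word q) (lift_word q').
Proof. exact: (twisted_subst_U_equiv (U := U) lift_letter_twisted). Qed.

Definition lift_arrow (x : gV De * word (gE De) * gV De) : gV Ga * word (gE Ga) * gV Ga :=
  (lift x.1.1, lift_word x.1.2, lift x.2).

Lemma lift_word_path i q j : is_path i q j -> is_path (lift i) (lift_word q) (lift j).
Proof.
elim: q i => [|a q IH] i /=; first by move=> ->.
by move=> [<- qj]; apply: is_path_cat (lift_letter_path a) _; exact: IH.
Qed.

Lemma span_lift_maps i q : maps (span (lift i) (lift_word q)) (span i q).
Proof.
split => [v [->|[l [lq vl]]] | e eq]; first by left; rewrite liftK.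
  have [a aq la] := in_subst_word lq; right; exists a; split => //.
  by have [] := proj_lift_letter_ends la; case: vl => ->.
have [b eb] : exists b, List.In (e, b) (lift_word q) by case: eq; eexists; eassumption.
have [a aq ela] := in_subst_word eb; have := proj_lift_letter_edge ela.
by case: (proj_edge e) => [d /= ->|//]; case: a aq {ela} => d0 [] /=; auto.
Qed.

Lemma C0_lift_maps i p j : is_path i p j ->
  maps (C0 U (lift i) (lift_word p) (lift j)) (C0 U i p j).
Proof.
move=> pij; split => [v C0v q qij qp | e C0e].
  apply: (span_lift_maps i q).1; apply: C0v; first exact: lift_word_path.
  exact: lift_word_U_equiv qij pij qp.
case ed: (proj_edge e) => [d|].
  move=> q qij qp; have := (span_lift_maps i q).2 e.
  by rewrite ed; apply; apply: C0e; [exact: lift_word_path | exact: lift_word_U_equiv qij pij qp].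
have := (span_lift_maps i p).2 e; rewrite ed; apply.
by apply: C0e; [exact: lift_word_path | exact: U_equiv_refl].
Qed.

Lemma lift_factorization i p j xs : is_path i p j ->
  xs <> [::] -> factorization i xs j -> U_equiv U (prod_word xs) p ->
  [/\ map lift_arrow xs <> [::], factorization (lift i) (map lift_arrow xs) (lift j)
    & U_equiv U (prod_word (map lift_arrow xs)) (lift_word p)].
Proof.
move=> pij xs0 xsf xsp; split; first by case: xs xs0 {xsf xsp}.
  elim: xs i xs0 xsf {xsp pij} => [|[[a q] b] xs IH] i //= _ [-> [qab xsf]].
  split => //; split; first exact: lift_word_path.
  by case: xs IH xsf => [_ /= -> //|x xs IH xsf]; apply: IH.
have -> : prod_word (map lift_arrow xs) = lift_word (prod_word xs).
  by elim: xs {xs0 xsf xsp} => //= x xs IH; rewrite /prod_word /= subst_word_cat -IH.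
exact: lift_word_U_equiv (factorization_path xsf) pij xsp.
Qed.

Definition Cn_lift_maps_at n : Prop := forall i p j, is_path i p j ->
  maps (Cn U n (lift i) (lift_word p) (lift j)) (Cn U n i p j).

Lemma lift_factor_maps n i j xs x' : Cn_lift_maps_at n ->
  factorization i xs j -> List.In x' (map lift_arrow xs) ->
  exists2 x, List.In x xs & maps (component (Cn U n x'.1.1 x'.1.2 x'.2) x'.1.1)
                                 (component (Cn U n x.1.1 x.1.2 x.2) x.1.1).
Proof.
move=> IH xsf /List.in_map_iff [x [<- xxs]]; exists x => //.
have := IH _ _ _ (factorization_mem_path xsf xxs).
by move/(subgraph_maps_component proj_edge_ends (lift x.1.1)); rewrite liftK.
Qed.

Lemma Cn_lift_maps n : Cn_lift_maps_at n.
Proof.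
elim: n => [|n IH] i p j pij; first exact: C0_lift_maps.
split => [v Cv xs xs0 xsf xsp | e Ce].
  have [xs'0 xs'f xs'p] := lift_factorization pij xs0 xsf xsp.
  have [x' [x'xs vx']] := Cv _ xs'0 xs'f xs'p.
  by have [x xxs [Mv _]] := lift_factor_maps IH xsf x'xs; exists x; split; last exact: Mv.
have maps_e xs : xs <> [::] -> factorization i xs j -> U_equiv U (prod_word xs) p ->
    exists2 x, List.In x xs & match proj_edge e with
                              | Some d => sE (component (Cn U n x.1.1 x.1.2 x.2) x.1.1) d
                              | None => proj (src e) = proj (tgt e)
                              end.
  move=> xs0 xsf xsp; have [xs'0 xs'f xs'p] := lift_factorization pij xs0 xsf xsp.
  have [x' [x'xs ex']] := Ce _ xs'0 xs'f xs'p.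
  by have [x xxs [_ Me]] := lift_factor_maps IH xsf x'xs; exists x; last exact: Me.
case ed: (proj_edge e) => [d|].
  move=> xs xs0 xsf xsp; have [x xxs] := maps_e xs xs0 xsf xsp.
  by rewrite ed => dx; exists x.
have [] := maps_e [:: (i, p, j)] => //; last by move=> x _; rewrite ed.
by rewrite /prod_word /= cats0; exact: U_equiv_refl.
Qed.

Lemma simulation_property_P : has_property_P U Ga -> has_property_P U De.
Proof.
move=> PGa i j p pij n.
have := (subgraph_maps_component proj_edge_ends (lift i) (Cn_lift_maps n pij)).1 _
  (PGa _ _ _ (lift_word_path pij) n).
by rewrite !liftK.
Qed.

End Simulation.

Lemma pick_injK (T : finType) (T' : eqType) (f : T -> T') :
  injective f -> forall x, [pick y | f y == f x] = Some x.
Proof. by move=> f_inj x; case: pickP => [y /eqP /f_inj -> // | /(_ x)]; rewrite eqxx. Qed.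

Lemma embedding_property_P (U : variety) (Ga De : graph)
    (fv : gV De -> gV Ga) (fe : gE De -> gE Ga) (flip : gE De -> bool) :
  injective fv -> injective fe ->
  (forall d, fv (src d) = if flip d then tgt (fe d) else src (fe d)) ->
  (forall d, fv (tgt d) = if flip d then src (fe d) else tgt (fe d)) ->
  has_property_P U Ga -> has_property_P U De.
Proof.
move=> fv_inj fe_inj fv_src fv_tgt PGa i0.
pose proj w := odflt i0 [pick v | fv v == w].
pose proj_edge e := [pick d | fe d == e].
pose lift_letter (a : gE De * bool) := [:: (fe a.1, if flip a.1 then ~~ a.2 else a.2)].
have projK : cancel fv proj by move=> v; rewrite /proj pick_injK.
have proj_src d : proj (src (fe d)) = if flip d then tgt d else src d.
  by case fd: (flip d); [rewrite -(projK (tgt d)) fv_tgt | rewrite -(projK (src d)) fv_src];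
    rewrite fd.
have proj_tgt d : proj (tgt (fe d)) = if flip d then src d else tgt d.
  by case fd: (flip d); [rewrite -(projK (src d)) fv_src | rewrite -(projK (tgt d)) fv_tgt];
    rewrite fd.
apply: (@simulation_property_P U Ga De fv lift_letter proj proj_edge _ _ projK _ _ _ PGa i0).
- case=> d b; rewrite /lift_letter /lsrc /ltgt /=.
  by case: b; rewrite /= fv_src fv_tgt; case: (flip d).
- move=> G f; exists (fun d => if flip d then ginv (f (fe d)) else f (fe d)), (fun=> gone G).
  case=> d b; rewrite /= /eval_letter /= ginv1 gmul1x !gmulx1.
  by case: (flip d); case: b; rewrite ?ginvK.
- move=> x d; rewrite /proj_edge; case: pickP => [d' /eqP <- [<-] | //].
  by rewrite proj_src proj_tgt; case: (flip d'); [right | left].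
- case=> d b l /= [<- | []]; rewrite /lsrc /ltgt /=.
  by case: (flip d) (proj_src d) (proj_tgt d); case: b => /= -> ->; auto.
- by case=> d b l /= [<- | []]; rewrite /proj_edge /= pick_injK.
Qed.

Section Contraction.
Variables (U : variety) (Ga De : graph) (e : gE Ga).
Variables (fv : gV Ga -> gV De) (fe : gE De -> gE Ga).

Hypothesis e_not_loop : src e <> tgt e.
Hypothesis fv_surj : forall y, exists x, fv x = y.
Hypothesis fv_eq_iff : forall x x', fv x = fv x' <->
  (x = x' \/ ((x = src e \/ x = tgt e) /\ (x' = src e \/ x' = tgt e))).
Hypothesis fe_inj : injective fe.
Hypothesis fe_neq : forall y, fe y <> e.
Hypothesis src_fe : forall y, src y = fv (src (fe y)).
Hypothesis tgt_fe : forall y, tgt y = fv (tgt (fe y)).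

Definition detour (x y : gV Ga) : word (gE Ga) :=
  if x == y then [::] else if x == src e then [:: (e, true)] else [:: (e, false)].

Definition detour_weight (G : group) (f : gE Ga -> G) (x : gV Ga) : G :=
  if x == src e then f e else gone G.

Lemma e_src_tgtF : (src e == tgt e) = false.
Proof. exact/eqP. Qed.

Lemma e_tgt_srcF : (tgt e == src e) = false.
Proof. by apply/eqP => /esym. Qed.

Lemma fv_e_tgt_src : fv (tgt e) = fv (src e).
Proof. by apply/fv_eq_iff; auto. Qed.

Lemma fv_eq_cases x y : fv x = fv y ->
  x = y \/ (x = src e /\ y = tgt e) \/ (x = tgt e /\ y = src e).
Proof. by move/fv_eq_iff => [-> | [[->|->] [->|->]]]; auto. Qed.

Lemma detour_path x y : fv x = fv y -> is_path x (detour x y) y.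
Proof.
by rewrite /detour => /fv_eq_cases [-> | [[-> ->] | [-> ->]]];
  rewrite ?eqxx ?e_src_tgtF ?e_tgt_srcF ?eqxx.
Qed.

Lemma detour_letter x y l : fv x = fv y -> List.In l (detour x y) ->
  l.1 = e /\ fv (lsrc l) = fv x /\ fv (ltgt l) = fv x.
Proof.
rewrite /detour => /fv_eq_cases [-> | [[-> ->] | [-> ->]]]; first by rewrite eqxx.
  by rewrite e_src_tgtF eqxx => -[<- | []]; rewrite /lsrc /ltgt /= fv_e_tgt_src.
by rewrite e_tgt_srcF => -[<- | []]; rewrite /lsrc /ltgt /= fv_e_tgt_src.
Qed.

Lemma eval_detour (G : group) (f : gE Ga -> G) x y : fv x = fv y ->
  eval_word f (detour x y) = gmul (detour_weight f x) (ginv (detour_weight f y)).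
Proof.
rewrite /detour /detour_weight => /fv_eq_cases [-> | [[-> ->] | [-> ->]]].
- by rewrite eqxx gmulxV.
- by rewrite e_src_tgtF eqxx e_tgt_srcF ginv1 /= !gmulx1.
- by rewrite e_tgt_srcF eqxx /= /eval_letter /= gmul1x gmulx1.
Qed.

Lemma fv_exists v : exists x, fv x == v.
Proof. by have [x <-] := fv_surj v; exists x. Qed.

Definition contraction_lift (v : gV De) : gV Ga := xchoose (fv_exists v).

Lemma contraction_liftK : cancel contraction_lift fv.
Proof. by move=> v; apply/eqP; exact: (xchooseP (fv_exists v)). Qed.

Definition edge_image (a : gE De * bool) : gE Ga * bool := (fe a.1, a.2).

Lemma fv_edge_image_src a : fv (lsrc (edge_image a)) = lsrc a.
Proof. by case: a => d []; rewrite /lsrc /= -?src_fe -?tgt_fe. Qed.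

Lemma fv_edge_image_tgt a : fv (ltgt (edge_image a)) = ltgt a.
Proof. by case: a => d []; rewrite /ltgt /= -?src_fe -?tgt_fe. Qed.

Lemma fv_lift_src a : fv (contraction_lift (lsrc a)) = fv (lsrc (edge_image a)).
Proof. by rewrite contraction_liftK fv_edge_image_src. Qed.

Lemma fv_lift_tgt a : fv (ltgt (edge_image a)) = fv (contraction_lift (ltgt a)).
Proof. by rewrite contraction_liftK fv_edge_image_tgt. Qed.

Definition contraction_lift_letter (a : gE De * bool) : word (gE Ga) :=
  detour (contraction_lift (lsrc a)) (lsrc (edge_image a)) ++
  edge_image a :: detour (ltgt (edge_image a)) (contraction_lift (ltgt a)).

Lemma contraction_lift_letter_twisted : twisted_subst contraction_lift_letter.
Proof.
move=> G f; pose c := detour_weight f.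
exists (fun d => gmul (ginv (c (src (fe d)))) (gmul (f (fe d)) (c (tgt (fe d))))).
exists (fun v => c (contraction_lift v)) => a.
rewrite eval_word_cat /= !eval_detour ?fv_lift_src ?fv_lift_tgt // -!gmulA.
congr (gmul _ _); case: a => d [] /=; rewrite /eval_letter /lsrc /ltgt /=.
  by rewrite !gmulA.
by rewrite !ginvM ginvK -!gmulA ?gmulA.
Qed.

Lemma contraction_property_P : has_property_P U Ga -> has_property_P U De.
Proof.
have no_pick_e : [pick d | fe d == e] = None by case: pickP => [d /eqP /fe_neq | ].
apply: (@simulation_property_P U Ga De contraction_lift contraction_lift_letter fv
          (fun x => [pick d | fe d == x]) _ contraction_lift_letter_twisted contraction_liftK).
- move=> a; apply: is_path_cat (detour_path (fv_lift_src a)) _.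
  by split => //; exact: detour_path (fv_lift_tgt a).
- by move=> x d; case: pickP => [d' /eqP <- [<-] | //]; left; rewrite -src_fe -tgt_fe.
- move=> a l l_in; case: (List.in_app_or _ _ _ l_in) => [{}l_in | [<- | {}l_in]].
  + have [_ [-> ->]] := detour_letter (fv_lift_src a) l_in.
    by rewrite contraction_liftK; auto.
  + by rewrite fv_edge_image_src fv_edge_image_tgt; auto.
  + have [_ [-> ->]] := detour_letter (fv_lift_tgt a) l_in.
    by rewrite fv_edge_image_tgt; auto.
- move=> a l l_in; case: (List.in_app_or _ _ _ l_in) => [{}l_in | [<- | {}l_in]].
  + by have [-> _] := detour_letter (fv_lift_src a) l_in; rewrite /= no_pick_e fv_e_tgt_src.
  + by rewrite /= pick_injK.
  + by have [-> _] := detour_letter (fv_lift_tgt a) l_in; rewrite /= no_pick_e fv_e_tgt_src.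
Qed.

End Contraction.

Lemma minor_step_property_P (U : variety) (G H : graph) :
  minor_step G H -> has_property_P U G -> has_property_P U H.
Proof.
case=> [[fv [fe [fv_bij [fe_bij [fv_src fv_tgt]]]]] |
       [[e [fv [fe [fv_bij [fe_inj [_ [_ [fv_src fv_tgt]]]]]]]] |
       [[v [fv [fe [fv_inj [_ [_ [fe_inj [_ [fv_src fv_tgt]]]]]]]]] |
       [[e [e_not_loop [fv [fe [fv_surj [fv_eq [fe_inj [fe_neq [_ [src_fe tgt_fe]]]]]]]]]] |
        [e [fv [fe [fv_bij [fe_bij [fv_src fv_tgt]]]]]]]]]].
- exact: (embedding_property_P (flip := fun=> false) (bij_inj fv_bij) (bij_inj fe_bij)).
- exact: (embedding_property_P (flip := fun=> false) (bij_inj fv_bij) fe_inj).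
- exact: (embedding_property_P (flip := fun=> false) fv_inj fe_inj).
- exact: (contraction_property_P e_not_loop fv_surj fv_eq fe_inj fe_neq src_fe tgt_fe).
- exact: (embedding_property_P (flip := fun y => fe y == e) (bij_inj fv_bij) (bij_inj fe_bij)).
Qed.

Theorem proposition3p1 (U : variety) (Gamma Delta : graph) :
  connected_graph Gamma -> connected_graph Delta ->
  minor Gamma Delta -> ~ has_property_P U Delta -> ~ has_property_P U Gamma.
Proof.
move=> _ _ minor_GD notP_D P_G; apply: notP_D.
by elim: minor_GD => [// | H K _ P_H step]; exact: minor_step_property_P step P_H.
Qed.
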